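(* Let $\operatorname{Li}_s(z)=\sum_{m=1}^\infty \frac{z^m}{m^s}$ denote the polylogarithm and $\zeta$ the Riemann zeta function. Then $$\int_0^1 \frac{\operatorname{Li}_4(-x)}{1 + x}\,dx = \frac{17}{16}\zeta (5) -\frac{3}{8}\zeta(2)\zeta(3) -\frac{7}{8}\log(2)\zeta(4).$$ *)

From Stdlib Require Import Reals.
From Coquelicot Require Import Coquelicot.
Open Scope R_scope.

Definition polylog (s : nat) (z : R) : R :=
  Series (fun n : nat => z ^ (S n) / (INR (S n)) ^ s).

Definition zeta (s : nat) : R :=
  Series (fun n : nat => / (INR (S n)) ^ s).

From Stdlib Require Import Reals Lra Lia.
From Coquelicot Require Import Coquelicot.
Open Scope R_scope.

(* Expanding Li_4(-x) = sum_m (-1)^m x^m / m^4, uniformly convergent on [0, 1], and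
   using  int_0^1 x^m / (1 + x) dx = (-1)^m r_m  with  r_m = ln 2 + sum_{k <= m} (-1)^k / k,
   the integral is the limit of  I_N = sum_{m <= N} r_m / m^4.  Partial fractions on the
   diagonals of the double sum rewrite I_N as
     sum_{n <= N} r_(N-n) / n^4 - A_1 A_4 - A_2 A_3 + 2 H_5 + A_5   (all at N),
   where H_s and A_s are the partial sums of sum 1/k^s and sum (-1)^k/k^s.  Since
   |r_m| <= 1/(m+1) the convolution is O(1/N); along even N,
   A_s(2M) = -H_s(2M) + 2^(1-s) H_s(M) tends to (2^(1-s) - 1) zeta(s), and A_1 to -ln 2. *)

Fixpoint sum1 (f : nat -> R) (n : nat) : R :=
  match n with O => 0 | S k => sum1 f k + f (S k) end.

Lemma sum1_ext (f g : nat -> R) n :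
  (forall k, (1 <= k <= n)%nat -> f k = g k) -> sum1 f n = sum1 g n.
Proof.
  induction n as [|n IH]; intros Hfg; simpl; [reflexivity|].
  rewrite IH, Hfg; [reflexivity | lia | intros k Hk; apply Hfg; lia].
Qed.

Lemma sum1_plus f g n : sum1 (fun k => f k + g k) n = sum1 f n + sum1 g n.
Proof. induction n as [|n IH]; simpl; [lra | rewrite IH; lra]. Qed.

Lemma sum1_scal c f n : sum1 (fun k => c * f k) n = c * sum1 f n.
Proof. induction n as [|n IH]; simpl; [lra | rewrite IH; lra]. Qed.

Lemma sum1_shift f n : sum1 f (S n) = f 1%nat + sum1 (fun k => f (S k)) n.
Proof. induction n as [|n IH]; simpl in *; [lra | rewrite IH; lra]. Qed.

Lemma sum1_rev f n : sum1 (fun k => f (S n - k)%nat) n = sum1 f n.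
Proof.
  revert f; induction n as [|n IH]; intros f; [reflexivity|].
  rewrite (sum1_shift f), <- (IH (fun k => f (S k))); cbn [sum1].
  replace (S (S n) - S n)%nat with 1%nat by lia.
  rewrite (sum1_ext _ (fun k => f (S (S n - k)))); [lra|].
  intros k Hk; f_equal; lia.
Qed.

Lemma sum1_le f g n :
  (forall k, (1 <= k <= n)%nat -> f k <= g k) -> sum1 f n <= sum1 g n.
Proof.
  induction n as [|n IH]; intros Hfg; simpl; [lra|].
  apply Rplus_le_compat; [apply IH; intros k Hk|]; apply Hfg; lia.
Qed.

Lemma sum1_abs f n : Rabs (sum1 f n) <= sum1 (fun k => Rabs (f k)) n.
Proof.
  induction n as [|n IH]; simpl; [rewrite Rabs_R0; lra|].
  eapply Rle_trans; [apply Rabs_triang | lra].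
Qed.

Lemma sum1_sum_f_R0 f n : sum1 f (S n) = sum_f_R0 (fun k => f (S k)) n.
Proof. induction n as [|n IH]; simpl in *; [lra | rewrite IH; lra]. Qed.

Lemma pow_m1_sqr k : (-1) ^ k * (-1) ^ k = 1.
Proof. rewrite <- pow_add; replace (k + k)%nat with (2 * k)%nat by lia; apply pow_1_even. Qed.

Lemma INR_S_gt0 n : 0 < INR (S n).
Proof. apply lt_0_INR; lia. Qed.

Definition harmonic (s N : nat) : R := sum1 (fun m => / INR m ^ s) N.
Definition alt_harmonic (s N : nat) : R := sum1 (fun m => (-1) ^ m / INR m ^ s) N.
Definition ln2_tail (m : nat) : R := ln 2 + alt_harmonic 1 m.

Lemma alt_harmonic_S s N :
  alt_harmonic s (S N) = alt_harmonic s N + (-1) ^ S N / INR (S N) ^ s.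
Proof. reflexivity. Qed.

Lemma ln2_tail_S m :
  (-1) ^ S m * ln2_tail (S m) = / INR (S m) - (-1) ^ m * ln2_tail m.
Proof.
  unfold ln2_tail; rewrite alt_harmonic_S, <- tech_pow_Rmult, pow_1.
  assert (Hx := INR_S_gt0 m); assert (Hs := pow_m1_sqr m).
  set (s := (-1) ^ m) in *; set (x := INR (S m)) in *.
  transitivity (/ x * (s * s) - s * (ln 2 + alt_harmonic 1 m)).
  - field; lra.
  - rewrite Hs; ring.
Qed.

Lemma is_RInt_pow_01 m : is_RInt (fun x => x ^ m) 0 1 (/ INR (S m)).
Proof.
  assert (Hm := INR_S_gt0 m).
  replace (/ INR (S m)) with (1 ^ S m / INR (S m) - 0 ^ S m / INR (S m))
    by (rewrite pow1, pow_i by lia; field; lra).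
  apply (is_RInt_derive (fun x => x ^ S m / INR (S m))).
  - intros x _; auto_derive; [easy|].
    change (match m with 0%nat => 1 | S _ => INR m + 1 end) with (INR (S m)).
    field; lra.
  - intros x _; apply (ex_derive_continuous (fun y => y ^ m)); auto_derive; easy.
Qed.

Lemma is_RInt_pow_div_1px m :
  is_RInt (fun x => x ^ m / (1 + x)) 0 1 ((-1) ^ m * ln2_tail m).
Proof.
  induction m as [|m IH].
  - replace ((-1) ^ 0 * ln2_tail 0) with (ln (1 + 1) - ln (1 + 0))
      by (unfold ln2_tail, alt_harmonic; simpl; rewrite Rplus_0_r, ln_1;
          replace (1 + 1) with 2 by ring; ring).
    apply (is_RInt_derive (fun x => ln (1 + x))); intros x Hx;
      rewrite Rmin_left, Rmax_right in Hx by lra.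
    + auto_derive; [lra | field; lra].
    + apply (ex_derive_continuous (fun y => y ^ 0 / (1 + y))); auto_derive; lra.
  - rewrite ln2_tail_S.
    apply (is_RInt_ext (fun x => x ^ m - x ^ m / (1 + x))).
    { intros x Hx; rewrite Rmin_left, Rmax_right in Hx by lra; simpl; field; lra. }
    exact (is_RInt_minus _ _ _ _ _ _ (is_RInt_pow_01 m) IH).
Qed.

(* [ln2_tail m] is, up to sign, the integral of [x^m / (1+x)]; the integrand
   is positive and adding two consecutive ones gives [x^m]. *)
Lemma Rabs_ln2_tail_le m : Rabs (ln2_tail m) <= / INR (S m).
Proof.
  assert (Hint : forall k, 0 <= (-1) ^ k * ln2_tail k).
  { intros k; apply (is_RInt_ge_0 _ 0 1 _ ltac:(lra) (is_RInt_pow_div_1px k)).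
    intros x Hx; apply Rdiv_le_0_compat; [apply pow_le|]; lra. }
  assert (HS := Hint (S m)); rewrite ln2_tail_S in HS.
  replace (ln2_tail m) with ((-1) ^ m * ((-1) ^ m * ln2_tail m))
    by (rewrite <- Rmult_assoc, pow_m1_sqr; ring).
  rewrite Rabs_mult, <- RPow_abs, Rabs_m1, pow1, Rabs_pos_eq by apply Hint.
  lra.
Qed.

Lemma is_RInt_polylog_partial s N :
  is_RInt (fun x => sum1 (fun m => (- x) ^ m / INR m ^ s) N / (1 + x)) 0 1
    (sum1 (fun m => ln2_tail m / INR m ^ s) N).
Proof.
  induction N as [|N IH].
  - apply (is_RInt_ext (fun _ => 0)).
    { intros x Hx; rewrite Rmin_left, Rmax_right in Hx by lra; simpl; field; lra. }
    replace (sum1 (fun m => ln2_tail m / INR m ^ s) 0) with (scal (1 - 0) 0)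
      by (cbn; unfold mult; simpl; ring).
    apply (is_RInt_const (V := R_NormedModule)).
  - set (c := (-1) ^ S N / INR (S N) ^ s).
    apply (is_RInt_ext (fun x => plus (sum1 (fun m => (- x) ^ m / INR m ^ s) N / (1 + x))
                                      (scal c (x ^ S N / (1 + x))))).
    { intros x Hx; rewrite Rmin_left, Rmax_right in Hx by lra.
      assert (Hk := INR_S_gt0 N); unfold c; cbn [sum1]; set (k := INR (S N)) in *.
      unfold plus, scal; simpl; unfold mult; simpl.
      replace (- x) with (-1 * x) by ring; rewrite Rpow_mult_distr.
      field; split; [apply pow_nonzero|]; lra. }
    replace (sum1 _ (S N)) with (plus (sum1 (fun m => ln2_tail m / INR m ^ s) N)
                                      (scal c ((-1) ^ S N * ln2_tail (S N)))).
    + apply (is_RInt_plus (V := R_NormedModule)); [exact IH|].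
      apply (is_RInt_scal (V := R_NormedModule)), is_RInt_pow_div_1px.
    + assert (Hk := INR_S_gt0 N); assert (Hs := pow_m1_sqr (S N)).
      unfold c; cbn [sum1]; set (k := INR (S N)) in *; set (sg := (-1) ^ S N) in *.
      unfold plus, scal; simpl; unfold mult; simpl.
      transitivity (sum1 (fun m => ln2_tail m / INR m ^ s) N
                    + sg * sg * ln2_tail (S N) / k ^ s).
      * field; apply pow_nonzero; lra.
      * rewrite Hs; field; apply pow_nonzero; lra.
Qed.

Lemma is_lim_seq_0_of_le_inv (u : nat -> R) (c : R) :
  (forall n, (0 < n)%nat -> Rabs (u n) <= c / INR n) -> is_lim_seq u 0.
Proof.
  intros Hu; apply is_lim_seq_incr_1.
  assert (Hinv : is_lim_seq (fun n => c / INR (S n)) 0).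
  { assert (H := is_lim_seq_scal_l _ c _ (is_lim_seq_inv _ _
       (proj1 (is_lim_seq_incr_1 INR p_infty) is_lim_seq_INR) ltac:(discriminate))).
    simpl in H; rewrite Rmult_0_r in H; exact H. }
  apply (is_lim_seq_le_le (fun n => - (c / INR (S n))) _ (fun n => c / INR (S n))).
  - intros n; apply Rabs_le_between, Hu; lia.
  - replace (Finite 0) with (Rbar_opp 0) by (simpl; f_equal; ring).
    exact (proj1 (is_lim_seq_opp _ _) Hinv).
  - exact Hinv.
Qed.

Lemma is_lim_seq_ln2_tail : is_lim_seq ln2_tail 0.
Proof.
  apply (is_lim_seq_0_of_le_inv _ 1); intros n Hn.
  eapply Rle_trans; [apply Rabs_ln2_tail_le|].
  assert (0 < INR n) by (apply lt_0_INR; lia).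
  rewrite S_INR; unfold Rdiv; rewrite Rmult_1_l.
  apply Rinv_le_contravar; lra.
Qed.

Lemma is_lim_seq_alt_harmonic1 : is_lim_seq (alt_harmonic 1) (- ln 2).
Proof.
  apply (is_lim_seq_ext (fun n => ln2_tail n - ln 2)); [intros n; unfold ln2_tail; ring|].
  replace (- ln 2) with (0 - ln 2) by ring.
  apply is_lim_seq_minus'; [exact is_lim_seq_ln2_tail | apply is_lim_seq_const].
Qed.

Lemma harmonic2_le N : harmonic 2 (S N) <= 2 - / INR (S N).
Proof.
  induction N as [|N IH]; [unfold harmonic; simpl; lra|].
  change (harmonic 2 (S (S N))) with (harmonic 2 (S N) + / INR (S (S N)) ^ 2).
  assert (Hx := INR_S_gt0 N); rewrite (S_INR (S N)) in *.
  set (x := INR (S N)) in *.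
  assert (/ (x + 1) ^ 2 <= / x - / (x + 1)).
  { replace (/ x - / (x + 1)) with (/ (x * (x + 1))) by (field; lra).
    apply Rinv_le_contravar; nra. }
  lra.
Qed.

Lemma harmonic_le_2 s N : (2 <= s)%nat -> harmonic s N <= 2.
Proof.
  intros Hs.
  assert (Hle : harmonic s N <= harmonic 2 N).
  { apply sum1_le; intros k Hk.
    assert (1 <= INR k) by (apply (le_INR 1); lia).
    apply Rinv_le_contravar; [apply pow_lt; lra | apply Rle_pow; auto]. }
  destruct N as [|N]; [unfold harmonic in *; simpl in *; lra|].
  assert (H2 := harmonic2_le N).
  assert (0 < / INR (S N)) by apply Rinv_0_lt_compat, INR_S_gt0.
  lra.
Qed.

Lemma harmonic_S_ge s N : harmonic s N <= harmonic s (S N).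
Proof.
  change (harmonic s (S N)) with (harmonic s N + / INR (S N) ^ s).
  assert (0 < / INR (S N) ^ s) by apply Rinv_0_lt_compat, pow_lt, INR_S_gt0.
  lra.
Qed.

Lemma harmonic_S_sum_n s N : harmonic s (S N) = sum_n (fun k => / INR (S k) ^ s) N.
Proof. rewrite sum_n_Reals; apply sum1_sum_f_R0. Qed.

Lemma is_series_zeta s : (2 <= s)%nat -> is_series (fun n => / INR (S n) ^ s) (zeta s).
Proof.
  intros Hs.
  destruct (ex_finite_lim_seq_incr (harmonic s) 2 (harmonic_S_ge s)
              (fun N => harmonic_le_2 s N Hs)) as [l Hl].
  apply is_lim_seq_incr_1 in Hl.
  assert (Hser : is_series (fun n => / INR (S n) ^ s) l)
    by exact (is_lim_seq_ext _ _ _ (harmonic_S_sum_n s) Hl).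
  unfold zeta; rewrite (is_series_unique _ _ Hser); exact Hser.
Qed.

Lemma is_lim_seq_harmonic s : (2 <= s)%nat -> is_lim_seq (harmonic s) (zeta s).
Proof.
  intros Hs; apply is_lim_seq_incr_1.
  apply (is_lim_seq_ext _ _ _ (fun N => eq_sym (harmonic_S_sum_n s N))).
  exact (is_series_zeta s Hs).
Qed.

Lemma alt_harmonic_double s M :
  alt_harmonic s (2 * M) = - harmonic s (2 * M) + 2 / 2 ^ s * harmonic s M.
Proof.
  induction M as [|M IH]; [unfold alt_harmonic, harmonic; simpl; ring|].
  replace (2 * S M)%nat with (S (S (2 * M))) by lia.
  unfold alt_harmonic, harmonic in *; cbn [sum1]; rewrite IH.
  rewrite <- !tech_pow_Rmult, pow_1_even.
  replace (INR (S (S (2 * M)))) with (2 * INR (S M))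
    by (rewrite !S_INR, mult_INR; simpl; ring).
  assert (0 < INR (S M)) by apply INR_S_gt0.
  assert (0 < INR (S (2 * M))) by apply INR_S_gt0.
  rewrite Rpow_mult_distr; field.
  repeat split; apply pow_nonzero; lra.
Qed.

Lemma filterlim_double : filterlim (fun n : nat => (2 * n)%nat) eventually eventually.
Proof. intros Q [N HN]; exists N; intros n Hn; apply HN; lia. Qed.

Lemma is_lim_seq_alt_harmonic_double s : (2 <= s)%nat ->
  is_lim_seq (fun M => alt_harmonic s (2 * M)) ((-1 + 2 / 2 ^ s) * zeta s).
Proof.
  intros Hs.
  apply (is_lim_seq_ext _ _ _ (fun M => eq_sym (alt_harmonic_double s M))).
  replace ((-1 + 2 / 2 ^ s) * zeta s) with (- zeta s + 2 / 2 ^ s * zeta s) by ring.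
  apply is_lim_seq_plus'.
  - apply (is_lim_seq_opp (fun M => harmonic s (2 * M)) (zeta s)).
    exact (is_lim_seq_subseq _ _ _ filterlim_double (is_lim_seq_harmonic s Hs)).
  - exact (is_lim_seq_scal_l _ (2 / 2 ^ s) _ (is_lim_seq_harmonic s Hs)).
Qed.

Definition tail_convolution (s N : nat) : R :=
  sum1 (fun n => ln2_tail (N - n) / INR n ^ s) N.

Lemma Rabs_tail_convolution_le s N : (3 <= s)%nat -> (0 < N)%nat ->
  Rabs (tail_convolution s N) <= 2 / INR N.
Proof.
  intros Hs HN.
  assert (HNpos : 0 < INR N) by (apply lt_0_INR; lia).
  eapply Rle_trans; [apply sum1_abs|].
  eapply Rle_trans; [apply (sum1_le _ (fun n => / INR N * / INR n ^ 2))|].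
  - intros n Hn.
    assert (Hn1 : 1 <= INR n) by (apply (le_INR 1); lia).
    assert (HnN : INR n <= INR N) by (apply le_INR; lia).
    assert (Hpos : 0 < INR n ^ s) by (apply pow_lt; lra).
    rewrite Rabs_div, (Rabs_pos_eq (INR n ^ s)) by lra.
    eapply Rle_trans.
    { apply Rmult_le_compat_r; [apply Rlt_le, Rinv_0_lt_compat, Hpos|].
      apply Rabs_ln2_tail_le. }
    rewrite S_INR, minus_INR by lia.
    rewrite <- Rinv_mult, <- Rinv_mult.
    apply Rinv_le_contravar; [apply Rmult_lt_0_compat; [|apply pow_lt]; lra|].
    assert (INR n ^ 3 <= INR n ^ s) by (apply Rle_pow; auto).
    assert (INR N <= INR n * (INR N - INR n + 1)) by nra.
    assert (INR N * INR n ^ 2 <= INR n ^ 3 * (INR N - INR n + 1)) by nra.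
    nra.
  - rewrite sum1_scal.
    assert (H2 := harmonic_le_2 2 N (le_n 2)); unfold harmonic in H2.
    assert (0 < / INR N) by (apply Rinv_0_lt_compat; lra).
    unfold Rdiv; nra.
Qed.

Lemma tail_convolution_S s N :
  tail_convolution s (S N) = tail_convolution s N + ln 2 / INR (S N) ^ s +
    sum1 (fun n => (-1) ^ S (N - n) / INR (S (N - n)) / INR n ^ s) N.
Proof.
  unfold tail_convolution; cbn [sum1]; rewrite Nat.sub_diag.
  replace (ln2_tail 0) with (ln 2) by (unfold ln2_tail, alt_harmonic; simpl; ring).
  rewrite (sum1_ext _ (fun n => ln2_tail (N - n) / INR n ^ s +
                                (-1) ^ S (N - n) / INR (S (N - n)) / INR n ^ s)).
  { rewrite sum1_plus; ring. }
  intros n Hn; replace (S N - n)%nat with (S (N - n)) by lia.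
  unfold ln2_tail, alt_harmonic; cbn [sum1]; rewrite pow_1.
  field; split; [|apply pow_nonzero]; apply not_0_INR; lia.
Qed.

Lemma alt_harmonic_mul_S a b N :
  alt_harmonic a (S N) * alt_harmonic b (S N) =
  alt_harmonic a N * alt_harmonic b N
  + (-1) ^ S N / INR (S N) ^ a * alt_harmonic b N
  + (-1) ^ S N / INR (S N) ^ b * alt_harmonic a N + / INR (S N) ^ (a + b).
Proof.
  rewrite !alt_harmonic_S, pow_add.
  assert (Hs := pow_m1_sqr (S N)); assert (Hx := INR_S_gt0 N).
  set (e := (-1) ^ S N) in *; set (x := INR (S N)) in *.
  transitivity (alt_harmonic a N * alt_harmonic b N + e / x ^ a * alt_harmonic b N
    + e / x ^ b * alt_harmonic a N + (e * e) / (x ^ a * x ^ b)).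
  - field; split; apply pow_nonzero; lra.
  - rewrite Hs; field; split; apply pow_nonzero; lra.
Qed.

(* Termwise partial fractions, with [k = N + 1] and [k - n = N + 1 - n]:
   [1 / (n^4 (k-n)) = 1/(k n^4) + 1/(k^2 n^3) + 1/(k^3 n^2) + 1/(k^4 n) + 1/(k^4 (k-n))];
   the last sum is [alt_harmonic 1 N] read backwards. *)
Lemma sum1_diagonal_partial_fractions N :
  sum1 (fun n => (-1) ^ S (N - n) / INR (S (N - n)) / INR n ^ 4) N =
  (-1) ^ S N / INR (S N) * alt_harmonic 4 N
  + (-1) ^ S N / INR (S N) ^ 2 * alt_harmonic 3 N
  + (-1) ^ S N / INR (S N) ^ 3 * alt_harmonic 2 N
  + (-1) ^ S N / INR (S N) ^ 4 * alt_harmonic 1 N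
  + / INR (S N) ^ 4 * alt_harmonic 1 N.
Proof.
  unfold alt_harmonic; rewrite <- (sum1_rev (fun m => (-1) ^ m / INR m ^ 1) N) at 2.
  rewrite <- !sum1_scal, <- !sum1_plus.
  apply sum1_ext; intros n Hn.
  replace (S N - n)%nat with (S (N - n)) by lia.
  assert (Hsign : (-1) ^ S (N - n) = (-1) ^ S N * (-1) ^ n).
  { replace (S N) with (S (N - n) + n)%nat by lia.
    rewrite pow_add, Rmult_assoc, pow_m1_sqr; ring. }
  assert (Hk : INR (S N) = INR n + INR (S (N - n))).
  { rewrite <- plus_INR; f_equal; lia. }
  assert (0 < INR n) by (apply lt_0_INR; lia).
  assert (Hb := INR_S_gt0 (N - n)).
  rewrite Hsign, Hk, pow_1.
  field; repeat split; lra.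
Qed.

Lemma partial_integral_decomposition N :
  sum1 (fun m => ln2_tail m / INR m ^ 4) N =
  tail_convolution 4 N - alt_harmonic 1 N * alt_harmonic 4 N
  - alt_harmonic 2 N * alt_harmonic 3 N + 2 * harmonic 5 N + alt_harmonic 5 N.
Proof.
  induction N as [|N IH]; [unfold tail_convolution, alt_harmonic, harmonic; simpl; ring|].
  cbn [sum1]; rewrite IH, tail_convolution_S, sum1_diagonal_partial_fractions,
    !alt_harmonic_mul_S.
  unfold ln2_tail; rewrite !alt_harmonic_S.
  change (harmonic 5 (S N)) with (harmonic 5 N + / INR (S N) ^ 5).
  assert (Hx := INR_S_gt0 N).
  change (1 + 4)%nat with 5%nat; change (2 + 3)%nat with 5%nat.
  field; lra.
Qed.

Lemma is_lim_seq_tail_convolution s : (3 <= s)%nat ->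
  is_lim_seq (tail_convolution s) 0.
Proof.
  intros Hs; apply (is_lim_seq_0_of_le_inv _ 2); intros N HN.
  exact (Rabs_tail_convolution_le s N Hs HN).
Qed.

Lemma is_lim_seq_partial_integral_double :
  is_lim_seq (fun M => sum1 (fun m => ln2_tail m / INR m ^ 4) (2 * M))
    (17/16 * zeta 5 - 3/8 * zeta 2 * zeta 3 - 7/8 * ln 2 * zeta 4).
Proof.
  apply (is_lim_seq_ext _ _ _ (fun M => eq_sym (partial_integral_decomposition (2 * M)))).
  assert (hE := is_lim_seq_subseq _ _ _ filterlim_double
                  (is_lim_seq_tail_convolution 4 ltac:(lia))).
  assert (h1 := is_lim_seq_subseq _ _ _ filterlim_double is_lim_seq_alt_harmonic1).
  assert (h5 := is_lim_seq_subseq _ _ _ filterlim_double (is_lim_seq_harmonic 5 ltac:(lia))).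
  assert (a2 := is_lim_seq_alt_harmonic_double 2 ltac:(lia)).
  assert (a3 := is_lim_seq_alt_harmonic_double 3 ltac:(lia)).
  assert (a4 := is_lim_seq_alt_harmonic_double 4 ltac:(lia)).
  assert (a5 := is_lim_seq_alt_harmonic_double 5 ltac:(lia)).
  replace (17/16 * zeta 5 - 3/8 * zeta 2 * zeta 3 - 7/8 * ln 2 * zeta 4) with
    (0 - (- ln 2) * ((-1 + 2 / 2 ^ 4) * zeta 4)
     - ((-1 + 2 / 2 ^ 2) * zeta 2) * ((-1 + 2 / 2 ^ 3) * zeta 3)
     + 2 * zeta 5 + (-1 + 2 / 2 ^ 5) * zeta 5) by (simpl; field).
  apply is_lim_seq_plus'; [|exact a5].
  apply is_lim_seq_plus'; [|exact (is_lim_seq_scal_l _ 2 _ h5)].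
  apply is_lim_seq_minus'; [|apply is_lim_seq_mult'; assumption].
  apply is_lim_seq_minus'; [exact hE | apply is_lim_seq_mult'; assumption].
Qed.

Lemma Series_minus_sum_abs_le (a b : nat -> R) n :
  ex_series b -> (forall k, Rabs (a k) <= b k) ->
  Rabs (Series a - sum_f_R0 a n) <= Series b - sum_f_R0 b n.
Proof.
  intros Hb Hab.
  assert (Habs : ex_series (fun k => Rabs (a k))).
  { apply (ex_series_le (K := R_AbsRing) (V := R_CompleteNormedModule) _ b); [|exact Hb].
    intros k; unfold norm; simpl; unfold abs; simpl; rewrite Rabs_Rabsolu; apply Hab. }
  assert (Ha : ex_series a) by (apply ex_series_Rabs, Habs).
  rewrite (Series_incr_n a (S n)), (Series_incr_n b (S n)) by (easy || lia).
  simpl pred; rewrite !Rplus_minus_l.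
  eapply Rle_trans;
    [apply Series_Rabs, (ex_series_incr_n (fun k => Rabs (a k)) (S n)), Habs|].
  apply Series_le; [intros k; split; [apply Rabs_pos | apply Hab]|].
  apply (ex_series_incr_n b (S n)), Hb.
Qed.

Lemma Rabs_polylog_minus_sum1_le s z N : (2 <= s)%nat -> Rabs z <= 1 ->
  Rabs (polylog s z - sum1 (fun m => z ^ m / INR m ^ s) (S N))
  <= zeta s - harmonic s (S N).
Proof.
  intros Hs Hz.
  unfold polylog, harmonic; rewrite !sum1_sum_f_R0.
  apply Series_minus_sum_abs_le; [eexists; exact (is_series_zeta s Hs)|].
  intros k; assert (Hk := pow_lt _ s (INR_S_gt0 k)).
  rewrite Rabs_div, (Rabs_pos_eq (INR (S k) ^ s)), <- RPow_abs by lra.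
  unfold Rdiv; rewrite <- (Rmult_1_l (/ INR (S k) ^ s)) at 2.
  apply Rmult_le_compat_r; [apply Rlt_le, Rinv_0_lt_compat, Hk|].
  rewrite <- (pow1 (S k)); apply pow_incr; split; [apply Rabs_pos | exact Hz].
Qed.

(* [filterlim_RInt] asks for uniform convergence on all of [R]; clamping the
   argument to [[0, 1]] does not change the functions on the interval of
   integration. *)
Definition clamp01 (x : R) : R := Rmax 0 (Rmin 1 x).

Lemma clamp01_bounds x : 0 <= clamp01 x <= 1.
Proof. unfold clamp01; split; [apply Rmax_l | apply Rmax_lub; [lra | apply Rmin_l]]. Qed.

Lemma clamp01_id x : 0 <= x <= 1 -> clamp01 x = x.
Proof. intros Hx; unfold clamp01; rewrite Rmin_right, Rmax_right; lra. Qed.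

Lemma is_RInt_clamp01 (f : R -> R) (l : R) :
  is_RInt f 0 1 l <-> is_RInt (fun x => f (clamp01 x)) 0 1 l.
Proof.
  split; apply is_RInt_ext; intros x Hx;
    rewrite Rmin_left, Rmax_right in Hx by lra; rewrite clamp01_id by lra; reflexivity.
Qed.

Lemma filterlim_polylog_sum1_clamp01 s : (2 <= s)%nat ->
  filterlim (fun N x => sum1 (fun m => (- clamp01 x) ^ m / INR m ^ s) N / (1 + clamp01 x))
    eventually
    (locally ((fun x => polylog s (- clamp01 x) / (1 + clamp01 x))
              : fct_UniformSpace R R_UniformSpace)).
Proof.
  intros Hs; apply filterlim_locally; intros eps.
  destruct (proj2 (is_lim_seq_spec _ _) (is_lim_seq_harmonic s Hs) eps) as [N0 HN0].
  exists (S N0); intros [|N] HN t; [lia|].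
  assert (Hc := clamp01_bounds t); set (c := clamp01 t) in *.
  change (Rabs (sum1 (fun m => (- c) ^ m / INR m ^ s) (S N) / (1 + c)
                - polylog s (- c) / (1 + c)) < eps).
  assert (Htail := Rabs_polylog_minus_sum1_le s (- c) N Hs
                     ltac:(rewrite Rabs_Ropp, Rabs_pos_eq; lra)).
  assert (Hz := HN0 (S N) ltac:(lia)).
  rewrite <- Ropp_minus_distr, Rabs_Ropp in Hz.
  set (p := sum1 (fun m => (- c) ^ m / INR m ^ s) (S N)) in *.
  unfold Rdiv; rewrite <- Rmult_minus_distr_r.
  rewrite Rabs_mult, Rabs_minus_sym, (Rabs_pos_eq (/ (1 + c)))
    by (apply Rlt_le, Rinv_0_lt_compat; lra).
  set (d := Rabs (polylog s (- c) - p)) in *.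
  apply (Rle_lt_trans _ d).
  - assert (0 <= d) by apply Rabs_pos.
    apply Rmult_le_reg_r with (1 + c); [lra|].
    rewrite Rmult_assoc, Rinv_l, Rmult_1_r by lra; nra.
  - apply (Rle_lt_trans _ _ _ Htail), (Rle_lt_trans _ _ _ (Rle_abs _)), Hz.
Qed.

Theorem mainTheorem5 :
  is_RInt (fun x : R => polylog 4 (- x) / (1 + x)) 0 1
    (17/16 * zeta 5 - 3/8 * zeta 2 * zeta 3 - 7/8 * ln 2 * zeta 4).
Proof.
  set (I N := sum1 (fun m => ln2_tail m / INR m ^ 4) N).
  destruct (filterlim_RInt _ 0 1 eventually _ _ I
              (fun N => proj1 (is_RInt_clamp01 _ _) (is_RInt_polylog_partial 4 N))
              (filterlim_polylog_sum1_clamp01 4 ltac:(lia))) as [If [HI Hg]].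
  replace (17/16 * zeta 5 - 3/8 * zeta 2 * zeta 3 - 7/8 * ln 2 * zeta 4) with If.
  - exact (proj2 (is_RInt_clamp01 (fun x => polylog 4 (- x) / (1 + x)) If) Hg).
  - apply Rbar_finite_eq.
    rewrite <- (is_lim_seq_unique _ _ is_lim_seq_partial_integral_double).
    exact (eq_sym (is_lim_seq_unique _ _ (is_lim_seq_subseq I If _ filterlim_double HI))).
Qed.
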